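(* For any positive integer $\nu$, there exists a sequence of length $\nu^2+1$ consisting of $\nu$ symbols and having the isolated equality property.
   Context: A finite or infinite sequence $(x_0,x_1,x_2,\ldots)$ is said to have the isolated equality property if for all distinct positions $i\neq j$, whenever $x_i=x_j$ we have $x_{i+1}\neq x_{j+1}$ and $x_{i-1}\neq x_{j-1}$ (for those indices that exist in the sequence); that is, equality at any pair of locations implies inequality at the pair of their immediate successors and at the pair of their immediate predecessors. (This property is satisfied by state sequences of counter-assisted generators $x_i=f(x_{i-1})+i \pmod n$, for positions $i\neq j \pmod n$.) *)

From mathcomp Require Import all_boot.
Set Implicit Arguments. Unset Strict Implicit. Unset Printing Implicit Defensive.

Definition isolated_equality (T : eqType) (s : seq T) : Prop :=
  forall (x0 : T) (i j : nat), i < size s -> j < size s -> i <> j ->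
    nth x0 s i = nth x0 s j ->
    (i.+1 < size s -> j.+1 < size s -> nth x0 s i.+1 <> nth x0 s j.+1) /\
    (0 < i -> 0 < j -> nth x0 s i.-1 <> nth x0 s j.-1).

From mathcomp Require Import all_boot.
From mathcomp Require Import zify.
Set Implicit Arguments. Unset Strict Implicit. Unset Printing Implicit Defensive.

(* A sequence has the isolated equality property as soon as its consecutive
   pairs are pairwise distinct.  Over an alphabet of nu symbols there are
   nu^2 pairs, so for a sequence of length nu^2 + 1 this means containing
   every pair exactly once: a (linear) de Bruijn sequence of order 2.  Such
   a sequence is built one symbol at a time: once the symbols 0..n-1 are
   exhausted, the closed walk 0, n, n, 1, n, 2, n, ..., n-1, n, 0 traverses
   precisely the 2n+1 pairs involving the new symbol n. *)

Lemma pairmap_pair_map (T U : Type) (f : T -> U) (x : T) (s : seq T) :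
  pairmap pair (f x) (map f s) = map (fun p => (f p.1, f p.2)) (pairmap pair x s).
Proof. by elim: s x => //= y s IHs x; rewrite IHs. Qed.

Lemma isolated_equality_uniq_pairs (T : eqType) (x : T) (s : seq T) :
  uniq (pairmap pair x s) -> isolated_equality (x :: s).
Proof.
move=> uniq_xs x0 i j lt_is lt_js neq_ij eq_ij; rewrite /= in lt_is lt_js eq_ij *.
have eq_pair k : k < size s ->
    nth (x0, x0) (pairmap pair x s) k = (nth x0 (x :: s) k, nth x0 s k).
  by move=> lt_ks; rewrite (nth_pairmap x0 (x0, x0)).
have inj_nth k l : k < size s -> l < size s ->
    (nth x0 (x :: s) k, nth x0 s k) = (nth x0 (x :: s) l, nth x0 s l) -> k = l.
  move=> lt_ks lt_ls; rewrite -!eq_pair // => /eqP.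
  by rewrite nth_uniq ?size_pairmap // => /eqP.
split=> [lt_i1s lt_j1s eq_next | ].
  by apply: neq_ij; apply: inj_nth; rewrite ?eq_ij ?eq_next.
case: i => [|i] // in lt_is neq_ij eq_ij *.
case: j => [|j] // in lt_js neq_ij eq_ij * => _ _ eq_prev.
by apply: neq_ij; congr _.+1; apply: inj_nth => //; move: eq_prev eq_ij => /= -> ->.
Qed.

Lemma uniq_of_covering (T : finType) (s : seq T) :
  (forall x, x \in s) -> size s <= #|T| -> uniq s.
Proof.
move=> covering size_s; apply: (leq_size_uniq (enum_uniq T)) => [x _|].
  exact: covering.
by rewrite -cardT.
Qed.

Definition spokes (n : nat) (l : seq nat) : seq nat :=
  flatten [seq [:: k; n] | k <- l].

Lemma size_spokes n l : size (spokes n l) = (size l).*2.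
Proof. by elim: l => //= k l ->. Qed.

Lemma last_spokes n l : last n (spokes n l) = n.
Proof. by elim: l. Qed.

Lemma mem_pairs_spokes n k l : k \in l ->
  [/\ (n, k) \in pairmap pair n (spokes n l) & (k, n) \in pairmap pair n (spokes n l)].
Proof.
elim: l => //= j l IHl; rewrite inE => /predU1P [-> | /IHl [nk kn]].
  by rewrite !inE !eqxx orbT.
by rewrite !inE nk kn !orbT.
Qed.

Definition star_tour (n : nat) : seq nat := n :: n :: spokes n (iota 1 n.-1) ++ [:: 0].

Fixpoint debruijn (m : nat) : seq nat :=
  if m is m'.+1 then debruijn m' ++ star_tour m'.+1 else [:: 0].

Lemma size_debruijn m : size (debruijn m) = m.+1 ^ 2.
Proof.
elim: m => //= m IHm.
by rewrite size_cat IHm /= size_cat size_spokes size_iota /=; lia.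
Qed.

Lemma last_debruijn m : last 0 (debruijn m) = 0.
Proof. by case: m => //= m; rewrite last_cat /star_tour /= last_cat. Qed.

Lemma star_tour_cover n a b :
  maxn a b = n -> (a, b) \in pairmap pair 0 (star_tour n).
Proof.
set spoke_pairs := pairmap pair n (spokes n (iota 1 n.-1)).
have -> : pairmap pair 0 (star_tour n) = [:: (0, n), (n, n) & spoke_pairs ++ [:: (n, 0)]].
  by rewrite /star_tour /= pairmap_cat last_spokes.
rewrite !(inE, mem_cat) !xpair_eqE => max_ab.
have spoke k : 0 < k < n -> [/\ (n, k) \in spoke_pairs & (k, n) \in spoke_pairs].
  by move=> k_range; apply: mem_pairs_spokes; rewrite mem_iota; lia.
have [b_0 | b_pos] := posnP b; first by rewrite b_0; lia.
have [a_0 | a_pos] := posnP a; first by rewrite a_0; lia.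
have [a_n | a_lt_n] := eqVneq a n.
  have [b_n | b_lt_n] := eqVneq b n; first by rewrite a_n b_n; lia.
  by rewrite a_n; have [-> _] := spoke b ltac:(lia); rewrite !orbT.
have b_n : b = n by lia.
by rewrite b_n; have [_ ->] := spoke a ltac:(lia); rewrite !orbT.
Qed.

Lemma debruijn_cover m a b :
  a <= m -> b <= m -> (a, b) \in pairmap pair 0 (debruijn m).
Proof.
elim: m => [|m IHm] in a b *; first by rewrite !leqn0 => /eqP -> /eqP ->.
move=> le_am1 le_bm1; rewrite /= pairmap_cat last_debruijn mem_cat.
have [le_am | lt_ma] := leqP a m; have [le_bm | lt_mb] := leqP b m.
- by rewrite IHm.
all: by rewrite star_tour_cover ?orbT //; lia.
Qed.

Theorem mainTheorem5 (nu : nat) (hnu : 0 < nu) :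
  exists s : seq 'I_nu, size s = nu ^ 2 + 1 /\ isolated_equality s.
Proof.
case: nu hnu => [|m] // _.
exists (map inord (0 :: debruijn m)); split.
  by rewrite size_map /= size_debruijn addn1.
apply: isolated_equality_uniq_pairs; apply: uniq_of_covering.
  move=> [a b]; rewrite pairmap_pair_map -[a]inord_val -[b]inord_val.
  apply/mapP; exists (nat_of_ord a, nat_of_ord b) => //.
  by apply: debruijn_cover; rewrite -ltnS ltn_ord.
by rewrite size_pairmap size_map size_debruijn card_prod card_ord.
Qed.
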